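(* Let $\mathcal A_V$ be the algebra of Laurent polynomials in $a_V,b_V,c_V,d_V$ with the log-canonical Poisson bracket $\{a_V,b_V\}=a_Vb_V$, $\{a_V,c_V\}=0$, $\{a_V,d_V\}=-\tfrac12 a_Vd_V$, $\{b_V,c_V\}=0$, $\{b_V,d_V\}=-\tfrac12 b_Vd_V$, $\{c_V,d_V\}=-\tfrac12 c_Vd_V$. Let $\mathcal A_{III}$ be the algebra of Laurent polynomials in $a,b,c,d,e,f,g,h$ with the log-canonical bracket $\{a,b\}=\tfrac12 ab,\ \{a,c\}=0,\ \{a,d\}=-\tfrac14 ad,\ \{a,e\}=\tfrac14 ae,\ \{a,f\}=\tfrac14 af,\ \{a,g\}=-\tfrac14 ag,\ \{a,h\}=\tfrac14 ah,$ $\{b,c\}=0,\ \{b,d\}=-\tfrac14 bd,\ \{b,e\}=\tfrac14 be,\ \{b,f\}=-\tfrac14 bf,\ \{b,g\}=-\tfrac14 bg,\ \{b,h\}=\tfrac14 bh,$ $\{c,d\}=-\tfrac12 cd,\ \{c,e\}=\tfrac12 ce,\ \{c,f\}=\{c,g\}=\{c,h\}=0,$ $\{d,e\}=0,\ \{d,f\}=\tfrac14 df,\ \{d,g\}=\{d,h\}=0,$ $\{e,f\}=-\tfrac14 ef,\ \{e,g\}=\{e,h\}=0,\ \{f,g\}=\tfrac14 fg,\ \{f,h\}=-\tfrac14 fh,\ \{h,g\}=0$. Then the assignment $a_V\mapsto af$, $b_V\mapsto bf$, $c_V\mapsto c$, $d_V\mapsto d$ defines an injective Poisson homomorphism $\mathcal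 A_V\to\mathcal A_{III}$, realising $\mathcal A_V$ as the Poisson subalgebra of functions of $af,bf,c,d$; moreover $h$ and $g$ Poisson commute with this subalgebra.
   Context: A log-canonical bracket is extended from the generators to all Laurent polynomials by bilinearity, antisymmetry and the Leibniz rule. *)

From HB Require Import structures.
From mathcomp Require Import all_boot all_order all_algebra.
From mathcomp Require Import freeg.
Set Implicit Arguments. Unset Strict Implicit. Unset Printing Implicit Defensive.
Import Order.TTheory GRing.Theory Num.Theory.
Local Open Scope ring_scope.

(* Laurent polynomials in n variables x_0..x_{n-1} over R: finite formal
   R-linear combinations of monomials x^a, with exponent a in Z^n
   (a row vector of integers). *)
Notation expo n := 'rV[int]_n.
Notation LP R n := {freeg 'rV[int]_n / R}.

Definition mono (R : fieldType) (n : nat) (a : expo n) : LP R n := << a >>.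
Definition LP1 (R : fieldType) (n : nat) : LP R n := mono R (0 : expo n).
Definition gen (R : fieldType) (n : nat) (i : 'I_n) : LP R n :=
  mono R (delta_mx 0 i : expo n).

Definition LPmul (R : fieldType) (n : nat) (p q : LP R n) : LP R n :=
  \sum_(a <- dom p) \sum_(b <- dom q)
     << coeff a p * coeff b q *g (a + b) >>.

(* log-canonical bracket with structure matrix Om ({x_i,x_j} = Om i j x_i x_j),
   extended by bilinearity and Leibniz; on monomials
   {x^a, x^b} = (sum_{i,j} a_i b_j Om i j) x^(a+b). *)
Definition omega (R : fieldType) (n : nat) (Om : 'M[R]_n) (a b : expo n) : R :=
  \sum_(i < n) \sum_(j < n) ((a 0 i)%:~R * (b 0 j)%:~R * Om i j).

Definition LPbr (R : fieldType) (n : nat) (Om : 'M[R]_n) (p q : LP R n) : LP R n :=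
  \sum_(a <- dom p) \sum_(b <- dom q)
     << coeff a p * coeff b q * omega Om a b *g (a + b) >>.

Definition antisym (R : fieldType) (n : nat) (u : nat -> nat -> R) : 'M[R]_n :=
  \matrix_(i < n, j < n)
    (if (i < j)%N then u i j else if (j < i)%N then - u j i else 0).

Definition half (R : fieldType) : R := (2%:R)^-1.
Definition quarter (R : fieldType) : R := (4%:R)^-1.

(* A_V: variables a_V,b_V,c_V,d_V = x_0,x_1,x_2,x_3 *)
Definition uV (R : fieldType) (i j : nat) : R :=
  match i, j with
  | 0, 1 => 1
  | 0, 3 => - half R
  | 1, 3 => - half R
  | 2, 3 => - half R
  | _, _ => 0
  end.
Definition OmV (R : fieldType) : 'M[R]_4 := antisym 4 (uV R).

(* A_III: variables a,b,c,d,e,f,g,h = x_0,...,x_7 *)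
Definition uIII (R : fieldType) (i j : nat) : R :=
  match i, j with
  | 0, 1 => half R | 0, 3 => - quarter R | 0, 4 => quarter R
  | 0, 5 => quarter R | 0, 6 => - quarter R | 0, 7 => quarter R
  | 1, 3 => - quarter R | 1, 4 => quarter R | 1, 5 => - quarter R
  | 1, 6 => - quarter R | 1, 7 => quarter R
  | 2, 3 => - half R | 2, 4 => half R
  | 3, 5 => quarter R
  | 4, 5 => - quarter R
  | 5, 6 => quarter R | 5, 7 => - quarter R
  | _, _ => 0
  end.
Definition OmIII (R : fieldType) : 'M[R]_8 := antisym 8 (uIII R).

Definition LPhom (R : fieldType) (n m : nat) (phi : LP R n -> LP R m) : Prop :=
  [/\ forall p q, phi (p + q) = phi p + phi q,
      forall (c : R) p, phi (c *: p) = c *: phi p,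
      forall p q, phi (LPmul p q) = LPmul (phi p) (phi q)
    & phi (LP1 R n) = LP1 R m].

Definition poisson_hom (R : fieldType) (n m : nat) (On : 'M[R]_n) (Om : 'M[R]_m)
  (phi : LP R n -> LP R m) : Prop :=
  LPhom phi /\ forall p q, phi (LPbr On p q) = LPbr Om (phi p) (phi q).

Definition xV (R : fieldType) (i : 'I_4) : LP R 4 := gen R i.
Definition xIII (R : fieldType) (i : 'I_8) : LP R 8 := gen R i.

Definition assignV (R : fieldType) (phi : LP R 4 -> LP R 8) : Prop :=
  [/\ phi (xV R (inord 0)) = LPmul (xIII R (inord 0)) (xIII R (inord 5)),
      phi (xV R (inord 1)) = LPmul (xIII R (inord 1)) (xIII R (inord 5)),
      phi (xV R (inord 2)) = xIII R (inord 2)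
    & phi (xV R (inord 3)) = xIII R (inord 3)].

From Pilot Require Import Defs.
From HB Require Import structures.
From mathcomp Require Import all_boot all_order all_algebra.
From mathcomp Require Import freeg ring.
Set Implicit Arguments. Unset Strict Implicit. Unset Printing Implicit Defensive.
Import Order.TTheory GRing.Theory Num.Theory.
Local Open Scope ring_scope.

(* An additive map [f] of exponent lattices with a left inverse induces an
   injective algebra map [x^a |-> x^(f a)], and this map intertwines two
   log-canonical brackets as soon as [f] pulls the bilinear form of the target
   back to that of the source.  The assignment [a_V |-> af, b_V |-> bf,
   c_V |-> c, d_V |-> d] is of this kind, and it determines the algebra map,
   since monomials are products of generators and their inverses.  Finally
   [g] and [h] commute with the image because the corresponding rows of the
   structure matrix vanish on every exponent [f a]; e.g. [{h, af} = 0] since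
   [{h, a} = -1/4 ha] and [{h, f} = 1/4 hf]. *)

Definition LPbilin (R : fieldType) (n : nat) (k : expo n -> expo n -> R)
    (p q : LP R n) : LP R n :=
  \sum_(a <- dom p) \sum_(b <- dom q)
     << coeff a p * coeff b q * k a b *g (a + b) >>.

Section LaurentPolynomials.
Variables (R : fieldType) (n : nat).
Implicit Types (p q : LP R n) (a b : expo n).

Lemma LPmulE p q : LPmul p q = LPbilin (fun _ _ => 1) p q.
Proof. by apply: eq_bigr => a _; apply: eq_bigr => b _; rewrite mulr1. Qed.

Lemma LPbrE (Om : 'M[R]_n) p q : LPbr Om p q = LPbilin (omega Om) p q.
Proof. by []. Qed.

Lemma coeff_dom_sum p c : coeff c p = \sum_(a <- dom p) coeff a p * (a == c)%:R.
Proof.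
have := congr1 (coeff c) (freeg_sumE p); rewrite raddf_sum => <-.
by apply: eq_bigr => a _; rewrite /= coeffU.
Qed.

Lemma coeff_LPbilin k p q c : coeff c (LPbilin k p q) =
  \sum_(a <- dom p) \sum_(b <- dom q) coeff a p * coeff b q * k a b * (a + b == c)%:R.
Proof.
rewrite raddf_sum; apply: eq_bigr => a _; rewrite raddf_sum.
by apply: eq_bigr => b _; rewrite /= coeffU.
Qed.

Lemma freegU_mono (k : R) a : << k *g a >> = k *: mono R a.
Proof. by apply/eqP/freeg_eqP => c; rewrite coeffZ !coeffU mul1r. Qed.

Lemma mono_mul a b : LPmul (mono R a) (mono R b) = mono R (a + b).
Proof. by rewrite /LPmul /mono !domU1 !big_seq1 !coeffU !eqxx !mulr1n !mulr1. Qed.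

Lemma LPmul_mono_inv a q : LPmul (mono R a) q = mono R 0 -> q = mono R (- a).
Proof.
move=> aq1; apply/eqP/freeg_eqP => c; rewrite [RHS]coeffU mul1r.
have := congr1 (coeff (c + a)) aq1.
rewrite LPmulE coeff_LPbilin /mono domU1 big_seq1 !coeffU eqxx !mul1r.
rewrite eq_sym addr_eq0 eq_sym => <-; rewrite [LHS]coeff_dom_sum.
apply: eq_bigr => b _; rewrite mulr1n mulr1 mul1r.
by rewrite [a + b]addrC (can_eq (addrK a)).
Qed.

Lemma omega_deltal (Om : 'M[R]_n) (i : 'I_n) b :
  omega Om (delta_mx 0 i) b = \sum_(j < n) (b 0 j)%:~R * Om i j.
Proof.
rewrite /omega (bigD1 i) //= [X in _ + X]big1 => [|i' i'i]; last first.
  by apply: big1 => j _; rewrite mxE eqxx (negbTE i'i) !mul0r.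
by rewrite addr0; apply: eq_bigr => j _; rewrite mxE !eqxx mul1r.
Qed.

End LaurentPolynomials.

Section MonomialMap.
Variables (R : fieldType) (n m : nat) (f : expo n -> expo m) (g : expo m -> expo n).
Hypothesis fK : cancel f g.
Implicit Types (p q : LP R n) (a b : expo n).

Definition LPmap p : LP R m := \sum_(a <- dom p) << coeff a p *g f a >>.

Lemma coeff_LPmap p c : coeff c (LPmap p) = (f (g c) == c)%:R * coeff (g c) p.
Proof.
rewrite raddf_sum; under eq_bigr do rewrite /= coeffU.
have [fgc|fgc] := eqVneq (f (g c)) c.
  rewrite mul1r [RHS]coeff_dom_sum; apply: eq_bigr => a _.
  by rewrite -{1}fgc (inj_eq (can_inj fK)).
rewrite mul0r big1 // => a _; have [fa|] := eqVneq (f a) c; last by rewrite mulr0.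
by move: fgc; rewrite -fa fK eqxx.
Qed.

Lemma coeff_LPmap_f a p : coeff (f a) (LPmap p) = coeff a p.
Proof. by rewrite coeff_LPmap fK eqxx mul1r. Qed.

Lemma LPmap_inj : injective LPmap.
Proof.
move=> p q pq; apply/eqP/freeg_eqP => a.
by rewrite -!(coeff_LPmap_f a) pq.
Qed.

Lemma dom_LPmap p : perm_eq (dom (LPmap p)) (map f (dom p)).
Proof.
apply: uniq_perm; rewrite ?(map_inj_uniq (can_inj fK)) ?uniq_dom // => c.
rewrite mem_dom coeff_LPmap; have [fgc|fgc] := eqVneq (f (g c)) c.
  by rewrite -{2}fgc (mem_map (can_inj fK)) mem_dom mul1r.
rewrite mul0r eqxx; apply/esym/mapP => -[a _ cfa].
by move: fgc; rewrite cfa fK eqxx.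
Qed.

Lemma big_dom_LPmap (M : nmodType) (F : expo m -> M) p :
  \sum_(c <- dom (LPmap p)) F c = \sum_(a <- dom p) F (f a).
Proof. by rewrite (perm_big _ (dom_LPmap p)) big_map. Qed.

Lemma LPmap_mono a : LPmap (mono R a) = mono R (f a).
Proof. by rewrite /LPmap /mono domU1 big_seq1 coeffU eqxx mulr1. Qed.

Lemma LPmap_central (Om : 'M[R]_m) e :
  (forall b, omega Om e (f b) = 0) -> forall p, LPbr Om (mono R e) (LPmap p) = 0.
Proof.
move=> eK p; apply/eqP/freeg_eqP => c.
rewrite coeff0 LPbrE coeff_LPbilin /mono domU1 big_seq1 big_dom_LPmap.
by rewrite big1 // => b _; rewrite eK mulr0 mul0r.
Qed.

Hypothesis fD : {morph f : a b / a + b}.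

Let f0 : f 0 = 0.
Proof. by apply: (@addIr _ (f 0)); rewrite -fD !add0r. Qed.

Let fN a : f (- a) = - f a.
Proof. by apply: (@addIr _ (f a)); rewrite -fD !addNr f0. Qed.

Lemma LPmap_LPbilin (k : expo n -> expo n -> R) (k' : expo m -> expo m -> R) :
  (forall a b, k' (f a) (f b) = k a b) ->
  forall p q, LPmap (LPbilin k p q) = LPbilin k' (LPmap p) (LPmap q).
Proof.
move=> kk' p q; apply/eqP/freeg_eqP => c.
rewrite coeff_LPmap !coeff_LPbilin !big_dom_LPmap mulr_sumr.
apply: eq_bigr => a _; rewrite big_dom_LPmap mulr_sumr; apply: eq_bigr => b _.
rewrite !coeff_LPmap_f kk' -fD mulrC -!mulrA; congr (_ * (_ * (_ * _))).
rewrite -natrM mulnb; congr (nat_of_bool _)%:R; apply/andP/eqP => [[/eqP-> /eqP]//|<-].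
by rewrite fK !eqxx.
Qed.

Lemma LPmap_hom : LPhom LPmap.
Proof.
split.
- by move=> p q; apply/eqP/freeg_eqP => c; rewrite coeffD !coeff_LPmap coeffD mulrDr.
- by move=> k p; apply/eqP/freeg_eqP => c; rewrite coeffZ !coeff_LPmap coeffZ mulrCA.
- by move=> p q; rewrite !LPmulE; apply: LPmap_LPbilin.
- by rewrite /LP1 LPmap_mono f0.
Qed.

Lemma LPmap_poisson (On : 'M[R]_n) (Om : 'M[R]_m) :
  (forall a b, omega Om (f a) (f b) = omega On a b) -> poisson_hom On Om LPmap.
Proof. by move=> omf; split; [exact: LPmap_hom | exact: LPmap_LPbilin]. Qed.

Lemma LPhom_eq_LPmap (phi : LP R n -> LP R m) : LPhom phi ->
  (forall i, phi (gen R i) = mono R (f (delta_mx 0 i))) -> phi =1 LPmap.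
Proof.
move=> [phiD phiZ phiM phi1] phi_gen.
pose onmono a := phi (mono R a) = mono R (f a).
have mono0 : onmono 0 by rewrite /onmono f0; exact: phi1.
have monoD a b : onmono a -> onmono b -> onmono (a + b).
  by rewrite /onmono -mono_mul phiM => -> ->; rewrite mono_mul fD.
have monoN a : onmono a -> onmono (- a).
  rewrite /onmono fN => fa; apply: LPmul_mono_inv.
  by rewrite -fa -phiM mono_mul addrN mono0 f0.
have monoMn a k : onmono a -> onmono (a *+ k).
  by move=> fa; elim: k => [|k IHk]; rewrite ?mulr0n ?mulrS //; apply: monoD.
have monoZ (z : int) a : onmono a -> onmono (z *: a).
  move=> fa; case: z => k; first by rewrite -natz scaler_nat; apply: monoMn.
  by rewrite NegzE scaleNr -natz scaler_nat; apply/monoN/monoMn.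
have monoT a : onmono a.
  rewrite (matrix_sum_delta a); apply: (big_ind onmono) => // i _.
  by apply: (big_ind onmono) => // j _; rewrite ord1; apply/monoZ/phi_gen.
have phi0 : phi 0 = 0 by rewrite -(scale0r 0) phiZ !scale0r.
move=> p; rewrite -[in LHS](freeg_sumE p) (big_morph phi phiD phi0).
by apply: eq_bigr => a _; rewrite !freegU_mono phiZ monoT.
Qed.

End MonomialMap.

Definition fV_entry (a : expo 4) (k : nat) : int :=
  match k with
  | 0 => a 0 (inord 0) | 1 => a 0 (inord 1) | 2 => a 0 (inord 2)
  | 3 => a 0 (inord 3) | 5 => a 0 (inord 0) + a 0 (inord 1)
  | _ => 0 end.

Definition fV (a : expo 4) : expo 8 := \row_(j < 8) fV_entry a j.

Definition gV (c : expo 8) : expo 4 :=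
  \row_(j < 4) c 0 (widen_ord (isT : (4 <= 8)%N) j).

Lemma fVK : cancel fV gV.
Proof.
move=> a; apply/rowP => -[[|[|[|[|k]]]] k4] //; rewrite !mxE /=;
  by congr (a 0 _); apply: val_inj; rewrite /= inordK.
Qed.

Lemma fVD : {morph fV : a b / a + b}.
Proof.
move=> a b; apply/rowP => -[[|[|[|[|[|[|k]]]]]] k8];
  by rewrite !mxE /= ?mxE ?addr0 // addrACA.
Qed.

Lemma fV_delta :
  [/\ fV (delta_mx 0 (inord 0)) = delta_mx 0 (inord 0) + delta_mx 0 (inord 5),
      fV (delta_mx 0 (inord 1)) = delta_mx 0 (inord 1) + delta_mx 0 (inord 5),
      fV (delta_mx 0 (inord 2)) = delta_mx 0 (inord 2)
    & fV (delta_mx 0 (inord 3)) = delta_mx 0 (inord 3)].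
Proof.
by split; apply/rowP => -[[|[|[|[|[|[|[|[|k]]]]]]]] k8];
  rewrite !mxE //= ?mxE -?val_eqE /= ?inordK.
Qed.

Lemma sum_ord_inord (M : nmodType) k (F : 'I_k.+1 -> M) :
  \sum_(i < k.+1) F i = \sum_(0 <= j < k.+1) F (inord j).
Proof. by rewrite big_mkord; apply: eq_bigr => i _; rewrite inord_val. Qed.

Lemma antisymE (R : fieldType) k (u : nat -> nat -> R) i j :
  (i <= k)%N -> (j <= k)%N -> antisym k.+1 u (inord i) (inord j) =
  if (i < j)%N then u i j else if (j < i)%N then - u j i else 0.
Proof. by move=> ik jk; rewrite mxE !inordK. Qed.

Lemma fVE a k : (k <= 7)%N -> fV a 0 (inord k) = fV_entry a k.
Proof. by move=> k7; rewrite mxE inordK. Qed.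

Section StructureMatrices.
Variable R : fieldType.
Hypothesis two_neq0 : (2%:R : R) != 0.

Let four_neq0 : (4%:R : R) != 0.
Proof. by rewrite (natrM R 2 2) mulf_neq0. Qed.

Lemma omega_fV a b : omega (OmIII R) (fV a) (fV b) = omega (OmV R) a b.
Proof.
rewrite /omega /OmIII /OmV !sum_ord_inord /index_iota /= !big_cons !big_nil.
rewrite !sum_ord_inord /index_iota /= !big_cons !big_nil.
rewrite !fVE // !antisymE //= /Defs.half /quarter !intrD !addr0 !mulr0 !mul0r.
by field; rewrite two_neq0 four_neq0.
Qed.

Lemma omega_row_fV k : k = 6%N \/ k = 7%N ->
  forall b, omega (OmIII R) (delta_mx 0 (inord k)) (fV b) = 0.
Proof.
move=> k67 b; rewrite omega_deltal sum_ord_inord /index_iota /= !big_cons big_nil.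
have k7 : (k <= 7)%N by case: k67 => ->.
rewrite !fVE // !antisymE //; case: k67 k7 => -> _ /=.
all: by rewrite /Defs.half /quarter !intrD !mul0r !addr0; field.
Qed.

End StructureMatrices.

Lemma assignV_LPmap (R : fieldType) : assignV (LPmap (R := R) fV).
Proof.
rewrite /assignV /xV /xIII /gen !LPmap_mono !mono_mul.
by case: fV_delta => -> -> -> ->.
Qed.

Lemma assignV_gen (R : fieldType) (phi : LP R 4 -> LP R 8) :
  assignV phi -> forall i, phi (gen R i) = mono R (fV (delta_mx 0 i)).
Proof.
rewrite /assignV /xV /xIII /gen => -[phi0 phi1 phi2 phi3] [[|[|[|[|k]]]] k4] //.
all: have [d0 d1 d2 d3] := fV_delta; rewrite -[Ordinal k4]inord_val /=.
all: by rewrite ?d0 ?d1 ?d2 ?d3 -?mono_mul.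
Qed.

Theorem mainTheorem6 (R : fieldType) (hR : [pchar R] =i pred0) :
  (exists phi : LP R 4 -> LP R 8, LPhom phi /\ assignV phi) /\
  (forall phi : LP R 4 -> LP R 8, LPhom phi -> assignV phi ->
     [/\ injective phi,
         poisson_hom (OmV R) (OmIII R) phi,
         (forall p q, exists r, phi r = LPbr (OmIII R) (phi p) (phi q)),
         (forall p, LPbr (OmIII R) (xIII R (inord 7)) (phi p) = 0)
       & (forall p, LPbr (OmIII R) (xIII R (inord 6)) (phi p) = 0)]).
Proof.
have two_neq0 : (2%:R : R) != 0 by rewrite ((pcharf0P R).1 hR).
split; first by exists (LPmap fV); split; [apply: LPmap_hom fVK fVD | apply: assignV_LPmap].
move=> phi phi_hom phi_gen; have phiE := LPhom_eq_LPmap fVD phi_hom (assignV_gen phi_gen).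
have [_ phi_br] := LPmap_poisson fVK fVD (omega_fV two_neq0).
have centre k (k67 : k = 6%N \/ k = 7%N) := LPmap_central fVK (omega_row_fV two_neq0 k67).
split.
- exact: eq_inj (LPmap_inj (R := R) fVK) (fsym phiE).
- by split=> // p q; rewrite !phiE phi_br.
- by move=> p q; exists (LPbr (OmV R) p q); rewrite !phiE phi_br.
- by move=> p; rewrite phiE centre //; right.
- by move=> p; rewrite phiE centre //; left.
Qed.
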